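(* For all complex $q$ with $|q|<1$, $$\psi(q^3)\psi(q^5)=\varphi(q^{60})\psi(q^8)+q^{14}\varphi(q^4)\psi(q^{120})+q^3\psi(q^{12})\psi(q^{20})+q^5\varphi(q^{40})\psi(q^{48})+q^9\varphi(q^{24})\psi(q^{80}),$$ $$\psi(q)\psi(q^{15})=\varphi(q^{120})\psi(q^{16})+q^{28}\varphi(q^8)\psi(q^{240})+q^6\psi(q^4)\psi(q^{60})+q\varphi(q^{20})\psi(q^{24})+q^3\varphi(q^{12})\psi(q^{40}).$$
   Context: Ramanujan's theta functions are $\varphi(q)=\sum_{n=-\infty}^{\infty}q^{n^2}$ and $\psi(q)=\sum_{n=0}^{\infty}q^{n(n+1)/2}$ for $|q|<1$. *)

From Stdlib Require Import Reals ZArith.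
From Coquelicot Require Import Coquelicot.
Open Scope C_scope.

Definition psi_partial (q : C) (N : nat) : C :=
  sum_n (fun n => q ^ (n * (n + 1) / 2)%nat) N.

(* Symmetric partial sums of phi: sum_{k=-N}^{N} q^{k^2}
   (index n = 0..2N corresponds to k = n - N). *)
Definition phi_partial (q : C) (N : nat) : C :=
  sum_n (fun n => q ^ Z.to_nat ((Z.of_nat n - Z.of_nat N) ^ 2)%Z) (2 * N)%nat.

(* Ramanujan's theta functions, as limits of the partial sums
   (the series converge absolutely for |q| < 1). *)
Definition psi (q : C) : C :=
  @lim C_CompleteNormedModule (filtermap (psi_partial q) eventually).

Definition phi (q : C) : C :=
  @lim C_CompleteNormedModule (filtermap (phi_partial q) eventually).

(* Since [2 psi(z)] is the sum of [z^((x^2-1)/8)] over odd integers [x], the product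
   [4 psi(q^3) psi(q^5)] is the sum of [q^((3x^2+5y^2-8)/8)] over pairs of odd integers, and
   [4 psi(q) psi(q^15)] the sum of [q^((x^2+15y^2-16)/8)].  For odd [x], [y] exactly one of
   [y = x, -x, 3x, -3x (mod 8)] holds (for the second form: [x = y, -y, y+8, -y+8 (mod 16)] or
   [x = 3y, -3y (mod 8)]), and [y -> -y] switches the sign.  Split further by congruences
   modulo 16 and 32, each class with the sign + is carried by an explicit linear substitution
   with rational coefficients bijectively onto the index set of one product of theta functions
   on the right, preserving the exponent; for the product [psi * psi] the image is only the
   half of its index set singled out by [x - y = 2 (mod 4)], the other half being its image
   under [y -> -y].  To rearrange these double series we cut them off at exponent [K]: the
   truncated sums are finite, equal under the bijections, and converge to the products. *)

From Stdlib Require Import Reals ZArith Lia List Permutation Psatz.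
From Coquelicot Require Import Coquelicot.
Import ListNotations.
Open Scope bool_scope.
Open Scope C_scope.

Definition lsum {A} (f : A -> C) (l : list A) : C :=
  fold_right (fun a s => f a + s) 0 l.

Lemma lsum_app {A} (f : A -> C) l1 l2 : lsum f (l1 ++ l2) = lsum f l1 + lsum f l2.
Proof. induction l1 as [|a l1 IH]; simpl; [ring | rewrite IH; ring]. Qed.

Lemma lsum_map {A B} (f : B -> C) (g : A -> B) l :
  lsum f (map g l) = lsum (fun x => f (g x)) l.
Proof. induction l as [|a l IH]; simpl; [reflexivity | now rewrite IH]. Qed.

Lemma lsum_perm {A} (f : A -> C) l1 l2 : Permutation l1 l2 -> lsum f l1 = lsum f l2.
Proof. induction 1; simpl; try congruence; ring. Qed.

Lemma lsum_ext {A} (f g : A -> C) l :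
  (forall x, In x l -> f x = g x) -> lsum f l = lsum g l.
Proof.
  induction l as [|a l IH]; simpl; intros H; [reflexivity|].
  rewrite H, IH; auto.
Qed.

Lemma lsum_mul_l {A} (f : A -> C) c l : c * lsum f l = lsum (fun x => c * f x) l.
Proof. induction l as [|a l IH]; simpl; [ring | rewrite <- IH; ring]. Qed.

Lemma lsum_prod {A B} (f : A -> C) (g : B -> C) l1 l2 :
  lsum (fun v => f (fst v) * g (snd v)) (list_prod l1 l2) = lsum f l1 * lsum g l2.
Proof.
  induction l1 as [|a l1 IH]; simpl; [ring|].
  rewrite lsum_app, IH, lsum_map, Cmult_plus_distr_r, (lsum_mul_l g (f a)). reflexivity.
Qed.

Lemma lsum_filter {A} (f : A -> C) p l :
  lsum f (filter p l) = lsum (fun x => if p x then f x else 0) l.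
Proof. induction l as [|a l IH]; simpl; auto. destruct (p a); simpl; rewrite IH; ring. Qed.

Lemma lsum_filter_split {A} (f : A -> C) p Q l :
  lsum f (filter p l)
  = lsum f (filter (fun x => p x && Q x) l) + lsum f (filter (fun x => p x && negb (Q x)) l).
Proof.
  induction l as [|a l IH]; simpl; [ring|].
  destruct (p a), (Q a); simpl; rewrite IH; ring.
Qed.

Lemma Cmod_lsum_le {A} (f : A -> C) l B :
  (forall x, In x l -> Cmod (f x) <= B)%R -> (Cmod (lsum f l) <= INR (length l) * B)%R.
Proof.
  induction l as [|a l IH]; intros H.
  - simpl. rewrite Cmod_0. lra.
  - change (Cmod (f a + lsum f l) <= INR (S (length l)) * B)%R. rewrite S_INR.
    eapply Rle_trans; [apply Cmod_triangle|].
    assert (Cmod (f a) <= B)%R by (apply H; now left).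
    assert (Cmod (lsum f l) <= INR (length l) * B)%R by (apply IH; intros; apply H; now right).
    lra.
Qed.

Lemma NoDup_list_prod {A B} (l1 : list A) (l2 : list B) :
  NoDup l1 -> NoDup l2 -> NoDup (list_prod l1 l2).
Proof.
  induction 1 as [|a l1 Ha _ IH]; simpl; intros H2; [constructor|].
  apply NoDup_app; auto.
  - apply NoDup_map_NoDup_ForallPairs; auto. intros ? ? _ _ E. now inversion E.
  - intros [a' b] H3 H4. apply in_map_iff in H3 as [y [E _]]. inversion E; subst.
    apply in_prod_iff in H4. tauto.
Qed.

Fixpoint zrange (n : nat) : list Z :=
  match n with
  | O => [0%Z]
  | S m => (- Z.of_nat (S m))%Z :: zrange m ++ [Z.of_nat (S m)]
  end.

Lemma in_zrange n x : In x (zrange n) <-> (Z.abs x <= Z.of_nat n)%Z.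
Proof.
  induction n as [|n IH]; simpl.
  - split; [intros [H|[]]; lia | intros; left; lia].
  - rewrite in_app_iff, IH. simpl. lia.
Qed.

Lemma NoDup_zrange n : NoDup (zrange n).
Proof.
  induction n as [|n IH]; simpl; [repeat constructor; simpl; tauto|].
  constructor; [rewrite in_app_iff, in_zrange; simpl; lia|].
  apply Permutation_NoDup with (Z.of_nat (S n) :: zrange n); [apply Permutation_cons_append|].
  constructor; auto. rewrite in_zrange. lia.
Qed.

Lemma length_zrange n : length (zrange n) = (2 * n + 1)%nat.
Proof. induction n as [|n IH]; simpl; auto. rewrite length_app, IH. simpl. lia. Qed.

Lemma lsum_zrange_S (f : Z -> C) n :
  lsum f (zrange (S n)) = f (- Z.of_nat (S n))%Z + f (Z.of_nat (S n)) + lsum f (zrange n).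
Proof. simpl. rewrite lsum_app. simpl. ring. Qed.

Definition box (n : nat) : list (Z * Z) := list_prod (zrange n) (zrange n).

Lemma filterlim_Cplus (u v : nat -> C) a b :
  filterlim u eventually (locally a) -> filterlim v eventually (locally b) ->
  filterlim (fun n => u n + v n) eventually (locally (a + b)).
Proof.
  intros Hu Hv. exact (filterlim_comp_2 _ _ _ Hu Hv (filterlim_plus (V := C_NormedModule) a b)).
Qed.

Lemma filterlim_C_of_Cmod_le (u : nat -> C) a (w : nat -> R) :
  is_lim_seq w 0%R -> (forall n, Cmod (u n - a) <= w n)%R -> filterlim u eventually (locally a).
Proof.
  intros Hw Hb. apply (filterlim_locally_ball_norm (K := C_AbsRing) (U := C_NormedModule)).
  intros eps. apply is_lim_seq_spec in Hw. destruct (Hw eps) as [N HN].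
  exists N. intros n Hn. specialize (HN n Hn). specialize (Hb n).
  change (Cmod (u n - a) < eps)%R. rewrite Rminus_0_r in HN. apply Rabs_lt_between in HN. lra.
Qed.

Lemma is_lim_seq_Cmod_sub (u : nat -> C) a :
  filterlim u eventually (locally a) -> is_lim_seq (fun n => Cmod (u n - a)) 0%R.
Proof.
  intros H. apply is_lim_seq_spec. intros eps.
  apply (filterlim_locally_ball_norm (K := C_AbsRing) (U := C_NormedModule)) with (eps := eps) in H.
  destruct H as [N HN]. exists N. intros n Hn. specialize (HN n Hn).
  change (Cmod (u n - a) < eps)%R in HN.
  rewrite Rminus_0_r, Rabs_pos_eq by apply Cmod_ge_0. exact HN.
Qed.

Lemma filterlim_Cmult (u v : nat -> C) a b :
  filterlim u eventually (locally a) -> filterlim v eventually (locally b) ->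
  filterlim (fun n => u n * v n) eventually (locally (a * b)).
Proof.
  intros Hu Hv. apply is_lim_seq_Cmod_sub in Hu. apply is_lim_seq_Cmod_sub in Hv.
  apply filterlim_C_of_Cmod_le with (w := fun n =>
    (Cmod (u n - a) * Cmod (v n - b) + Cmod a * Cmod (v n - b) + Cmod b * Cmod (u n - a))%R).
  - replace 0%R with (0 * 0 + Cmod a * 0 + Cmod b * 0)%R by ring.
    apply is_lim_seq_plus'; [apply is_lim_seq_plus'|];
      apply is_lim_seq_mult'; auto; apply is_lim_seq_const.
  - intros n.
    replace (u n * v n - a * b)
      with ((u n - a) * (v n - b) + a * (v n - b) + b * (u n - a)) by ring.
    eapply Rle_trans; [apply Cmod_triangle|]. rewrite !Cmod_mult.
    eapply Rle_trans; [apply Rplus_le_compat_r, Cmod_triangle|]. rewrite !Cmod_mult. lra.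
Qed.

Lemma filterlim_lsum {A} (u : A -> nat -> C) (a : A -> C) l :
  (forall x, In x l -> filterlim (u x) eventually (locally (a x))) ->
  filterlim (fun n => lsum (fun x => u x n) l) eventually (locally (lsum a l)).
Proof.
  induction l as [|x l IH]; intros H; simpl; [apply filterlim_const|].
  apply filterlim_Cplus; [apply H; now left | apply IH; intros; apply H; now right].
Qed.

Lemma filterlim_eventually_unique (u : nat -> C) a b :
  filterlim u eventually (locally a) -> filterlim u eventually (locally b) -> a = b.
Proof.
  intros Ha Hb.
  eapply (filterlim_locally_unique (FF := Proper_StrongProper _ eventually_filter));
    [exact Ha | exact Hb].
Qed.

Lemma lim_filtermap_eventually (u : nat -> C) l :
  filterlim u eventually (locally l) -> @lim C_CompleteNormedModule (filtermap u eventually) = l.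
Proof.
  intros H.
  set (l' := @lim C_CompleteNormedModule (filtermap u eventually)).
  assert (Hc : forall eps : posreal, filtermap u eventually (ball l' eps)).
  { apply complete_cauchy; [apply filtermap_proper_filter, eventually_filter|].
    intros eps. exists l. apply H, locally_ball. }
  symmetry. apply (filterlim_eventually_unique u); [exact H | now apply filterlim_locally].
Qed.

Lemma Cmult_4_inj (a b : C) : 4 * a = 4 * b -> a = b.
Proof.
  intros H. assert (H4 : (4 : C) <> 0) by (intros E; apply RtoC_inj in E; lra).
  replace a with (/ 4 * (4 * a)) by (field; exact H4). rewrite H. now field.
Qed.

Lemma pow_le_pow_le1 (r : R) n m : (0 <= r <= 1)%R -> (n <= m)%nat -> (r ^ m <= r ^ n)%R.
Proof.
  intros Hr Hnm. replace m with (n + (m - n))%nat by lia. rewrite pow_add.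
  assert (r ^ (m - n) <= 1)%R by (rewrite <- (pow1 (m - n)); apply pow_incr; lra).
  assert (0 <= r ^ n)%R by (apply pow_le; lra). nra.
Qed.

Lemma Cmod_pow_lt_1 (q : C) a : (Cmod q < 1)%R -> (1 <= a)%nat -> (Cmod (q ^ a) < 1)%R.
Proof.
  intros Hq Ha. rewrite Cmod_pow. pose proof (Cmod_ge_0 q).
  eapply Rle_lt_trans; [apply (pow_le_pow_le1 _ 1 a); auto; lra | simpl; lra].
Qed.

Lemma poly_geom_lim (s : R) : (0 < s < 1)%R -> is_lim_seq (fun n => (INR n + 1) ^ 2 * s ^ n)%R 0%R.
Proof.
  intros Hs. set (a n := ((INR n + 1) ^ 2 * s ^ n)%R).
  assert (Hpos : forall n, (0 < a n)%R).
  { intros n. pose proof (pos_INR n). apply Rmult_lt_0_compat; apply pow_lt; lra. }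
  assert (Hinv : is_lim_seq (fun n => / (INR n + 1))%R 0%R).
  { replace (Finite 0) with (Rbar_inv p_infty) by reflexivity.
    apply is_lim_seq_inv; [|discriminate].
    apply (is_lim_seq_ext (fun n => INR (S n))); [intros; apply S_INR|].
    apply (is_lim_seq_incr_1 INR), is_lim_seq_INR. }
  assert (Hratio : is_lim_seq (fun n => Rabs (a (S n) / a n)) s).
  { apply (is_lim_seq_ext (fun n => (1 + / (INR n + 1)) * (1 + / (INR n + 1)) * s)%R).
    - intros n. pose proof (pos_INR n). pose proof (Hpos n).
      rewrite Rabs_pos_eq; [|apply Rlt_le, Rdiv_lt_0_compat; auto].
      unfold a. rewrite S_INR. simpl. field. split; [apply pow_nonzero|]; lra.
    - assert (Hl : is_lim_seq (fun n => (1 + / (INR n + 1)) * (1 + / (INR n + 1)) * s)%R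
                       ((1 + 0) * (1 + 0) * s)%R).
      { apply is_lim_seq_mult'; [apply is_lim_seq_mult' | apply is_lim_seq_const];
          apply is_lim_seq_plus'; auto; apply is_lim_seq_const. }
      now rewrite Rplus_0_r, !Rmult_1_l in Hl. }
  apply (is_lim_seq_ext (fun n => Rabs (a n))).
  - intros n. apply Rabs_pos_eq, Rlt_le, Hpos.
  - apply ex_series_lim_0, (ex_series_DAlembert a s); [lra | | exact Hratio].
    intros n. apply Rgt_not_eq, Hpos.
Qed.

Lemma ex_series_pow (z : C) (e : nat -> nat) :
  (Cmod z < 1)%R -> (forall n, n <= e n)%nat ->
  exists l, filterlim (sum_n (fun n => z ^ e n)) eventually (locally l).
Proof.
  intros Hz He. pose proof (Cmod_ge_0 z).
  assert (Hs : ex_series (fun n => z ^ e n)).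
  { apply (@ex_series_le C_AbsRing C_CompleteNormedModule) with (b := fun n => (Cmod z ^ n)%R).
    - intros n. change (Cmod (z ^ e n) <= Cmod z ^ n)%R. rewrite Cmod_pow.
      apply pow_le_pow_le1; auto; lra.
    - apply ex_series_geom. rewrite Rabs_pos_eq; auto. }
  exact Hs.
Qed.

(** * Theta functions as sums over the integers *)

Inductive support := Odds | Ints.

Definition in_support (s : support) (x : Z) : bool :=
  match s with Odds => Z.odd x | Ints => true end.

Definition weight8 (s : support) (x : Z) : Z :=
  match s with Odds => x * x - 1 | Ints => 8 * (x * x) end.

(* [weight Odds (2n+1) = n(n+1)/2] and [weight Ints x = x^2] are the exponents of [psi] and
   [phi]; as [x] and [-x] contribute equally, the odd integers sum to [2 psi]. *)
Definition weight (s : support) (x : Z) : nat := Z.to_nat (weight8 s x / 8).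

Definition theta (s : support) (z : C) : C :=
  match s with Odds => 2 * psi z | Ints => phi z end.

Lemma weight8_nonneg s x : in_support s x = true -> (0 <= weight8 s x)%Z.
Proof.
  destruct s; cbn [in_support weight8]; intros Hx; [|nia].
  assert (x <> 0)%Z by (intros ->; discriminate). nia.
Qed.

Lemma weight_spec s x : in_support s x = true -> (8 * Z.of_nat (weight s x) = weight8 s x)%Z.
Proof.
  intros Hx. pose proof (weight8_nonneg s x Hx). unfold weight.
  rewrite Z2Nat.id by (apply Z.div_pos; lia).
  destruct s; cbn [in_support weight8] in *.
  2: { rewrite (Z.mul_comm 8 (x * x)), Z.div_mul by lia. ring. }
  rewrite Zodd_mod, Z.eqb_eq in Hx.
  assert (Hx4 : exists j, (x = 4 * j + 1 \/ x = 4 * j + 3)%Z)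
    by (exists (x / 4)%Z; Z.div_mod_to_equations; lia).
  destruct Hx4 as [j [-> | ->]]; Z.div_mod_to_equations; nia.
Qed.

Lemma weight_opp s x : weight s (- x) = weight s x.
Proof. unfold weight. destruct s; cbn [weight8]; f_equal; f_equal; ring. Qed.

Lemma weight_Ints x : weight Ints x = Z.to_nat (x ^ 2).
Proof. unfold weight; cbn [weight8]. now rewrite Z.mul_comm, Z.div_mul, Z.pow_2_r by lia. Qed.

Lemma weight_Odds_tri x n : (x * x = Z.of_nat (2 * n + 1) * Z.of_nat (2 * n + 1))%Z ->
  weight Odds x = (n * (n + 1) / 2)%nat.
Proof.
  intros Hx. unfold weight; cbn [weight8]. rewrite Hx.
  replace (Z.of_nat (2 * n + 1) * Z.of_nat (2 * n + 1) - 1)%Z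
    with (4 * Z.of_nat (n * (n + 1)))%Z by nia.
  rewrite (Z.div_mul_cancel_l _ 2 4) by lia.
  now rewrite <- (Nat2Z.inj_div _ 2), Nat2Z.id.
Qed.

Definition theta_partial (q : C) (s : support) (a M : nat) : C :=
  lsum (fun x => if in_support s x then q ^ (a * weight s x) else 0) (zrange M).

Lemma theta_partial_Odds q a N :
  theta_partial q Odds a (2 * N + 1) = 2 * psi_partial (q ^ a) N.
Proof.
  unfold theta_partial, psi_partial. induction N as [|N IH].
  - rewrite sum_O. simpl. rewrite !(weight_Odds_tri _ 0), Nat.mul_0_r by lia. simpl. ring.
  - replace (2 * S N + 1)%nat with (S (S (2 * N + 1))) by lia.
    rewrite !lsum_zrange_S, IH, sum_Sn. cbn [in_support].
    replace (Z.of_nat (S (S (2 * N + 1)))) with (2 * Z.of_nat (S N) + 1)%Z by lia.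
    replace (Z.of_nat (S (2 * N + 1))) with (2 * Z.of_nat (S N))%Z by lia.
    rewrite !Z.odd_opp, Z.odd_odd, Z.odd_even.
    rewrite !(weight_Odds_tri _ (S N)) by lia.
    rewrite Cpow_mult_r. change plus with Cplus. ring.
Qed.

Lemma sum_n_lsum_seq (f : nat -> C) m : sum_n f m = lsum f (seq 0 (S m)).
Proof.
  induction m as [|m IH]; [rewrite sum_O; simpl; ring|].
  rewrite sum_Sn, seq_S, lsum_app, <- IH. simpl. change plus with Cplus. ring.
Qed.

Lemma phi_partial_zrange z N :
  phi_partial z N = lsum (fun k => z ^ Z.to_nat (k ^ 2)) (zrange N).
Proof.
  unfold phi_partial. rewrite sum_n_lsum_seq.
  rewrite <- (lsum_map (fun k => z ^ Z.to_nat (k ^ 2)) (fun n => Z.of_nat n - Z.of_nat N)%Z).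
  apply lsum_perm, NoDup_Permutation.
  - apply NoDup_map_NoDup_ForallPairs; [intros x y _ _ H; lia | apply seq_NoDup].
  - apply NoDup_zrange.
  - intros x. rewrite in_map_iff, in_zrange. split.
    + intros [n [<- Hn]]. apply in_seq in Hn. lia.
    + intros Hx. exists (Z.to_nat (x + Z.of_nat N)). rewrite in_seq. lia.
Qed.

Lemma lsum_zrange_squares z N :
  lsum (fun k => z ^ Z.to_nat (k ^ 2)) (zrange N) = 2 * sum_n (fun k => z ^ (k * k)) N - 1.
Proof.
  induction N as [|N IH]; [rewrite sum_O; simpl; ring|].
  rewrite lsum_zrange_S, IH, sum_Sn. change plus with Cplus.
  replace (Z.to_nat ((- Z.of_nat (S N)) ^ 2)) with (S N * S N)%nat by lia.
  replace (Z.to_nat (Z.of_nat (S N) ^ 2)) with (S N * S N)%nat by lia.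
  ring.
Qed.

Lemma theta_partial_Ints q a N : theta_partial q Ints a N = phi_partial (q ^ a) N.
Proof.
  rewrite phi_partial_zrange. apply lsum_ext. intros x _. simpl.
  now rewrite weight_Ints, Cpow_mult_r.
Qed.

Lemma psi_partial_lim z : (Cmod z < 1)%R -> filterlim (psi_partial z) eventually (locally (psi z)).
Proof.
  intros Hz.
  destruct (ex_series_pow z (fun n => n * (n + 1) / 2)%nat Hz) as [l Hl].
  - intros n. apply Nat.div_le_lower_bound; nia.
  - change (filterlim (psi_partial z) eventually (locally l)) in Hl.
    unfold psi. now rewrite (lim_filtermap_eventually _ l Hl).
Qed.

Lemma phi_partial_lim z : (Cmod z < 1)%R -> filterlim (phi_partial z) eventually (locally (phi z)).
Proof.
  intros Hz. destruct (ex_series_pow z (fun k => k * k)%nat Hz) as [l Hl]; [intros; nia|].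
  assert (H : filterlim (phi_partial z) eventually (locally (2 * l + - 1))).
  { apply (filterlim_ext (fun N => 2 * sum_n (fun k => z ^ (k * k)) N + - 1)).
    - intros N. rewrite phi_partial_zrange, lsum_zrange_squares. ring.
    - apply filterlim_Cplus; [apply filterlim_Cmult; [apply filterlim_const | exact Hl]|].
      apply filterlim_const. }
  unfold phi. now rewrite (lim_filtermap_eventually _ _ H).
Qed.

Lemma theta_partial_lim q s a : (Cmod q < 1)%R -> (1 <= a)%nat ->
  filterlim (fun K => theta_partial q s a (4 * K + 1)) eventually (locally (theta s (q ^ a))).
Proof.
  intros Hq Ha. pose proof (Cmod_pow_lt_1 q a Hq Ha) as Hqa. destruct s; simpl.
  - apply (filterlim_ext (fun K => 2 * psi_partial (q ^ a) (2 * K))).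
    + intros K. rewrite <- theta_partial_Odds. f_equal. lia.
    + apply filterlim_Cmult; [apply filterlim_const|].
      eapply filterlim_comp; [apply eventually_subseq; intros; lia | now apply psi_partial_lim].
  - apply (filterlim_ext (fun K => phi_partial (q ^ a) (4 * K + 1))).
    + intros K. now rewrite theta_partial_Ints.
    + eapply filterlim_comp; [apply eventually_subseq; intros; lia | now apply phi_partial_lim].
Qed.

(** * Truncated lattice sums *)

(* When [coercive P E], the box contains every [v] with [P v] and [E v < K], so
   [trunc_sum q P E K] sums [q ^ E v] over exactly these points, whatever their position. *)
Definition trunc_sum (q : C) (P : Z * Z -> bool) (E : Z * Z -> nat) (K : nat) : C :=
  lsum (fun v => q ^ E v) (filter (fun v => P v && (E v <? K)%nat) (box (4 * K + 1))).

Definition coercive (P : Z * Z -> bool) (E : Z * Z -> nat) : Prop :=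
  forall v, P v = true ->
    (Z.abs (fst v) <= 4 * Z.of_nat (E v) + 1 /\ Z.abs (snd v) <= 4 * Z.of_nat (E v) + 1)%Z.

Lemma in_trunc_support P E K v : coercive P E ->
  In v (filter (fun v => P v && (E v <? K)%nat) (box (4 * K + 1))) <-> P v = true /\ (E v < K)%nat.
Proof.
  intros HPE. rewrite filter_In, Bool.andb_true_iff, Nat.ltb_lt. destruct v as [x y].
  unfold box. rewrite in_prod_iff, !in_zrange. split; [tauto|].
  intros [HP HK]. specialize (HPE _ HP). cbn [fst snd] in HPE. split; [lia | tauto].
Qed.

Lemma trunc_sum_ext q P P' E K : (forall v, P v = P' v) -> trunc_sum q P E K = trunc_sum q P' E K.
Proof. intros H. unfold trunc_sum. f_equal. apply filter_ext. intros v. now rewrite H. Qed.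

Lemma trunc_sum_split q P Q E K :
  trunc_sum q P E K
  = trunc_sum q (fun v => P v && Q v) E K + trunc_sum q (fun v => P v && negb (Q v)) E K.
Proof.
  unfold trunc_sum. rewrite (lsum_filter_split _ _ Q).
  f_equal; f_equal; apply filter_ext; intros v; now destruct (P v), (Q v), (E v <? K)%nat.
Qed.

Lemma trunc_sum_partition q P (Qs : list (Z * Z -> bool)) E K :
  (forall v, Nat.b2n (P v) = list_sum (map (fun Q => Nat.b2n (Q v)) Qs)) ->
  trunc_sum q P E K = lsum (fun Q => trunc_sum q Q E K) Qs.
Proof.
  revert P. induction Qs as [|Q Qs IH]; intros P HP; simpl.
  - rewrite (trunc_sum_ext q P (fun _ => false))
      by (intros v; specialize (HP v); now destruct (P v)).
    unfold trunc_sum. rewrite filter_ext with (g := fun _ => false) by reflexivity.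
    induction (box (4 * K + 1)); simpl; auto.
  - rewrite (trunc_sum_split q P Q), (IH (fun v => P v && negb (Q v))).
    + f_equal. apply trunc_sum_ext. intros v. specialize (HP v). simpl in HP |- *.
      destruct (P v), (Q v); simpl in *; try reflexivity; exfalso; lia.
    + intros v. specialize (HP v). simpl in HP |- *. destruct (P v), (Q v); simpl in *; lia.
Qed.

Lemma coercive_andb P Q E : coercive P E -> coercive (fun v => P v && Q v) E.
Proof. intros HPE v H. apply HPE. apply Bool.andb_true_iff in H. tauto. Qed.

Lemma trunc_sum_bij q P E P' E' (f g : Z * Z -> Z * Z) K :
  coercive P E -> coercive P' E' ->
  (forall v, P v = true -> P' (f v) = true) ->
  (forall v, P v = true -> E' (f v) = E v) ->
  (forall w, P' w = true -> P (g w) = true) ->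
  (forall v, P v = true -> g (f v) = v) ->
  (forall w, P' w = true -> f (g w) = w) ->
  trunc_sum q P E K = trunc_sum q P' E' K.
Proof.
  intros HPE HPE' Hf HE Hg Hgf Hfg. unfold trunc_sum.
  set (l := filter (fun v => P v && _) _). set (l' := filter (fun v => P' v && _) _).
  assert (Hl : forall v, In v l <-> P v = true /\ (E v < K)%nat)
    by (intros; now apply in_trunc_support).
  assert (Hl' : forall w, In w l' <-> P' w = true /\ (E' w < K)%nat)
    by (intros; now apply in_trunc_support).
  assert (Hperm : Permutation (map f l) l').
  { apply NoDup_Permutation.
    - apply NoDup_map_NoDup_ForallPairs; [|apply NoDup_filter, NoDup_list_prod; apply NoDup_zrange].
      intros x y Hx Hy Hxy. apply Hl in Hx, Hy.
      rewrite <- (Hgf x), <- (Hgf y) by tauto. congruence.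
    - apply NoDup_filter, NoDup_list_prod; apply NoDup_zrange.
    - intros w. rewrite in_map_iff, Hl'. split.
      + intros [v [<- Hv]]. apply Hl in Hv. rewrite HE by tauto. split; [apply Hf|]; tauto.
      + intros [HP' HK]. exists (g w). rewrite Hl, <- HE, Hfg by auto. auto. }
  rewrite <- (lsum_perm _ _ _ Hperm), lsum_map. apply lsum_ext.
  intros v Hv. apply Hl in Hv. now rewrite HE by tauto.
Qed.

Definition negate_snd (v : Z * Z) : Z * Z := (fst v, - snd v)%Z.

Lemma trunc_sum_half q P H E K :
  coercive P E -> (forall v, E (negate_snd v) = E v) ->
  (forall v, P v = H v || H (negate_snd v)) -> (forall v, H v && H (negate_snd v) = false) ->
  trunc_sum q P E K = 2 * trunc_sum q H E K.
Proof.
  intros HPE HE Hcover Hdisj.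
  assert (Hinv : forall v, negate_snd (negate_snd v) = v)
    by (intros [x y]; unfold negate_snd; simpl; now rewrite Z.opp_involutive).
  assert (HHE : coercive H E).
  { intros v Hv. apply HPE. now rewrite Hcover, Hv. }
  rewrite (trunc_sum_split q P H).
  rewrite (trunc_sum_ext q _ H)
    by (intros v; cbv beta; rewrite Hcover; now destruct (H v), (H (negate_snd v))).
  rewrite (trunc_sum_ext q (fun v => P v && negb (H v)) (fun v => H (negate_snd v))).
  2: { intros v. cbv beta. rewrite Hcover. specialize (Hdisj v).
       now destruct (H v), (H (negate_snd v)). }
  rewrite (trunc_sum_bij q (fun v => H (negate_snd v)) E H E negate_snd negate_snd); auto.
  - ring.
  - intros [x y] Hv. specialize (HHE _ Hv). rewrite HE in HHE. cbn in *. lia.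
  - intros v Hv. now rewrite Hinv.
Qed.

(* [Form c a s1 b s2] encodes [q^c theta s1 (q^a) theta s2 (q^b)] as a sum over the pairs in
   [form_support] of [q ^ form_weight]; [form_weight8 = 8 * form_weight] is a polynomial. *)
Record form := Form { f_shift : nat; f_scale1 : nat; f_supp1 : support;
                      f_scale2 : nat; f_supp2 : support }.

Definition form_support (F : form) (v : Z * Z) : bool :=
  in_support (f_supp1 F) (fst v) && in_support (f_supp2 F) (snd v).

Definition form_weight (F : form) (v : Z * Z) : nat :=
  f_shift F + f_scale1 F * weight (f_supp1 F) (fst v) + f_scale2 F * weight (f_supp2 F) (snd v).

Definition form_weight8 (F : form) (v : Z * Z) : Z :=
  8 * Z.of_nat (f_shift F) + Z.of_nat (f_scale1 F) * weight8 (f_supp1 F) (fst v)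
  + Z.of_nat (f_scale2 F) * weight8 (f_supp2 F) (snd v).

Definition form_value (q : C) (F : form) : C :=
  q ^ f_shift F * theta (f_supp1 F) (q ^ f_scale1 F) * theta (f_supp2 F) (q ^ f_scale2 F).

Definition proper_form (F : form) : Prop := (1 <= f_scale1 F /\ 1 <= f_scale2 F)%nat.

Definition form_sum (q : C) (F : form) (K : nat) : C :=
  trunc_sum q (form_support F) (form_weight F) K.

Lemma form_weight_negate_snd F v : form_weight F (negate_snd v) = form_weight F v.
Proof. unfold form_weight, negate_snd. simpl. now rewrite weight_opp. Qed.

Lemma form_weight_eq F F' v w :
  form_support F v = true -> form_support F' w = true -> form_weight8 F v = form_weight8 F' w ->
  form_weight F v = form_weight F' w.
Proof.
  unfold form_support, form_weight, form_weight8. rewrite !Bool.andb_true_iff.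
  intros [Hv1 Hv2] [Hw1 Hw2] H8.
  rewrite <- !weight_spec in H8 by assumption. lia.
Qed.

Lemma abs_le_weight s x : in_support s x = true -> (Z.abs x <= 4 * Z.of_nat (weight s x) + 1)%Z.
Proof.
  intros Hx. pose proof (weight_spec s x Hx) as Hw.
  destruct s; cbn [weight8] in Hw; nia.
Qed.

Lemma coercive_form F : proper_form F -> coercive (form_support F) (form_weight F).
Proof.
  intros [Ha Hb] [x y]. unfold form_support, form_weight. rewrite Bool.andb_true_iff.
  intros [Hx Hy]. apply abs_le_weight in Hx, Hy. cbn [fst snd] in *. nia.
Qed.

Lemma lsum_box_form q F M :
  lsum (fun v => q ^ form_weight F v) (filter (form_support F) (box M))
  = q ^ f_shift F * theta_partial q (f_supp1 F) (f_scale1 F) M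
    * theta_partial q (f_supp2 F) (f_scale2 F) M.
Proof.
  unfold theta_partial, box. rewrite lsum_filter, <- Cmult_assoc, <- lsum_prod, lsum_mul_l.
  apply lsum_ext. intros [x y] _. unfold form_support, form_weight. simpl.
  destruct (in_support _ x), (in_support _ y); simpl; rewrite ?Cpow_add_r; ring.
Qed.

Lemma Cmod_trunc_tail_le q P E K : (Cmod q <= 1)%R ->
  (Cmod (lsum (fun v => (q ^ E v)%C)
           (filter (fun v => P v && negb (E v <? K)%nat) (box (4 * K + 1))))
   <= 64 * ((INR K + 1) ^ 2 * Cmod q ^ K))%R.
Proof.
  intros Hq. pose proof (Cmod_ge_0 q).
  eapply Rle_trans; [apply Cmod_lsum_le with (B := (Cmod q ^ K)%R)|].
  - intros v Hv. apply filter_In in Hv as [_ Hv].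
    apply Bool.andb_true_iff in Hv as [_ Hv]. apply Bool.negb_true_iff, Nat.ltb_ge in Hv.
    rewrite Cmod_pow. apply pow_le_pow_le1; auto.
  - rewrite <- Rmult_assoc. apply Rmult_le_compat_r; [apply pow_le; lra|].
    eapply Rle_trans; [apply le_INR, filter_length_le|].
    unfold box. rewrite length_prod, length_zrange.
    replace (64 * (INR K + 1) ^ 2)%R with (INR (64 * (K + 1) * (K + 1)))
      by (rewrite !mult_INR, plus_INR; simpl; ring).
    apply le_INR. nia.
Qed.

Lemma form_sum_lim q F : (Cmod q < 1)%R -> proper_form F ->
  filterlim (form_sum q F) eventually (locally (form_value q F)).
Proof.
  intros Hq [Ha Hb]. pose proof (Cmod_ge_0 q).
  set (full K := lsum (fun v => q ^ form_weight F v) (filter (form_support F) (box (4 * K + 1)))).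
  set (tail K := lsum (fun v => q ^ form_weight F v)
       (filter (fun v => form_support F v && negb (form_weight F v <? K)%nat) (box (4 * K + 1)))).
  assert (Hsplit : forall K, form_sum q F K = full K - tail K)
    by (intros K; unfold full; rewrite (lsum_filter_split _ _ (fun v => form_weight F v <? K)%nat);
        unfold tail, form_sum, trunc_sum; ring).
  assert (Hfull : filterlim full eventually (locally (form_value q F))).
  { apply (filterlim_ext (fun K => q ^ f_shift F
      * theta_partial q (f_supp1 F) (f_scale1 F) (4 * K + 1)
      * theta_partial q (f_supp2 F) (f_scale2 F) (4 * K + 1))).
    - intros K. symmetry. apply lsum_box_form.
    - apply filterlim_Cmult; [apply filterlim_Cmult; [apply filterlim_const|] |];
        now apply theta_partial_lim. }
  set (s := ((1 + Cmod q) / 2)%R).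
  apply filterlim_C_of_Cmod_le with
    (w := fun K => (Cmod (full K - form_value q F) + 64 * ((INR K + 1) ^ 2 * s ^ K))%R).
  - replace 0%R with (0 + 64 * 0)%R by ring.
    apply is_lim_seq_plus'; [now apply is_lim_seq_Cmod_sub|].
    apply is_lim_seq_mult'; [apply is_lim_seq_const | apply poly_geom_lim; unfold s; lra].
  - intros K. rewrite Hsplit.
    replace (full K - tail K - form_value q F) with ((full K - form_value q F) + - tail K) by ring.
    eapply Rle_trans; [apply Cmod_triangle|]. rewrite Cmod_opp. apply Rplus_le_compat_l.
    eapply Rle_trans; [apply Cmod_trunc_tail_le; lra|].
    apply Rmult_le_compat_l; [lra|].
    apply Rmult_le_compat_l; [apply pow_le; pose proof (pos_INR K); lra|].
    apply pow_incr. unfold s. lra.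
Qed.

Lemma form_identity q F0 (terms : list (R * form)) : (Cmod q < 1)%R ->
  proper_form F0 -> (forall t, In t terms -> proper_form (snd t)) ->
  (forall K, form_sum q F0 K = lsum (fun t => RtoC (fst t) * form_sum q (snd t) K) terms) ->
  form_value q F0 = lsum (fun t => RtoC (fst t) * form_value q (snd t)) terms.
Proof.
  intros Hq H0 Hterms Hsum.
  apply (filterlim_eventually_unique (form_sum q F0)); [now apply form_sum_lim|].
  apply (filterlim_ext (fun K => lsum (fun t => RtoC (fst t) * form_sum q (snd t) K) terms));
    [intros K; symmetry; apply Hsum|].
  apply filterlim_lsum. intros t Ht.
  apply filterlim_Cmult; [apply filterlim_const | apply form_sum_lim; auto].
Qed.

Definition congr (a b m : Z) : bool := ((a - b) mod m =? 0)%Z.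

Create HintDb classes.

Ltac bool_to_Z :=
  autounfold with classes in *; unfold congr, form_support, negate_snd in *;
  cbn [fst snd f_supp1 f_supp2 in_support] in *; rewrite ?Zodd_mod in *;
  repeat rewrite ?Bool.andb_true_iff, ?Bool.orb_true_iff, ?Bool.negb_true_iff,
    ?Z.eqb_eq, ?Z.eqb_neq in *.

Ltac zsolve := Z.div_mod_to_equations; lia.

Ltac decide_congr :=
  lazymatch goal with
  | |- _ = true => idtac
  | |- _ = false => apply Bool.not_true_iff_false; intro
  | |- _ = _ => apply Bool.eq_iff_eq_true
  | |- _ => idtac
  end; bool_to_Z; zsolve.

Ltac name_quotients :=
  repeat match goal with
  | |- context [(?e / ?k)%Z] =>
      let d := fresh "d" in
      assert (e = k * (e / k))%Z by zsolve;
      set (d := (e / k)%Z) in *; clearbody d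
  end.

Ltac solve_coercive :=
  first [ apply coercive_form; split; cbn; lia | apply coercive_andb; solve_coercive ].

(* Side conditions of [trunc_sum_bij] for an explicit pair of maps: once each exact quotient
   [e / k] is named, preservation of the exponent is a polynomial identity between
   [form_weight8]s; everything else is linear congruence arithmetic. *)
Ltac solve_param :=
  autounfold with classes;
  first
  [ solve_coercive
  | intros [x y] H; apply form_weight_eq; [decide_congr | decide_congr |];
    bool_to_Z; unfold form_weight8; cbn [fst snd f_shift f_scale1 f_supp1 f_scale2 f_supp2 weight8];
    name_quotients; nia
  | intros [x y] H; cbn [fst snd]; decide_congr
  | intros [x y] H; cbn [fst snd]; bool_to_Z; f_equal; zsolve ].

(** * The first identity *)

Definition lhs1 : form := Form 0 3 Odds 5 Odds.

Definition half_lhs1 (v : Z * Z) : bool :=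
  form_support lhs1 v && (congr (fst v) (snd v) 8 || congr (snd v) (3 * fst v) 8).

Definition class1_1 (v : Z * Z) : bool :=
  half_lhs1 v && congr (fst v) (snd v) 8 && congr (3 * fst v + 5 * snd v) 8 16.
Definition class1_2 (v : Z * Z) : bool :=
  half_lhs1 v && congr (fst v) (snd v) 8 && negb (congr (3 * fst v + 5 * snd v) 8 16).
Definition class1_3 (v : Z * Z) : bool :=
  half_lhs1 v && negb (congr (fst v) (snd v) 8) && congr (fst v + 5 * snd v) 8 16.
Definition class1_4 (v : Z * Z) : bool :=
  half_lhs1 v && negb (congr (fst v) (snd v) 8) && negb (congr (fst v + 5 * snd v) 8 16)
  && congr (fst v + 5 * snd v) 16 32.
Definition class1_5 (v : Z * Z) : bool :=
  half_lhs1 v && negb (congr (fst v) (snd v) 8) && negb (congr (fst v + 5 * snd v) 8 16)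
  && negb (congr (fst v + 5 * snd v) 16 32).

Definition psipsi1 : form := Form 3 12 Odds 20 Odds.

Definition half_psipsi1 (v : Z * Z) : bool :=
  form_support psipsi1 v && congr (fst v) (snd v + 2) 4.

#[local] Hint Unfold lhs1 half_lhs1 class1_1 class1_2 class1_3 class1_4 class1_5
  psipsi1 half_psipsi1 : classes.

Lemma lhs1_halves q K : form_sum q lhs1 K = 2 * trunc_sum q half_lhs1 (form_weight lhs1) K.
Proof.
  apply trunc_sum_half; [apply coercive_form; split; cbn; lia | apply form_weight_negate_snd | |];
    intros [x y]; decide_congr.
Qed.

Lemma psipsi1_halves q K :
  form_sum q psipsi1 K = 2 * trunc_sum q half_psipsi1 (form_weight psipsi1) K.
Proof.
  apply trunc_sum_half; [apply coercive_form; split; cbn; lia | apply form_weight_negate_snd | |];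
    intros [x y]; decide_congr.
Qed.

Lemma half_lhs1_partition q K : trunc_sum q half_lhs1 (form_weight lhs1) K
  = lsum (fun Q => trunc_sum q Q (form_weight lhs1) K)
      [class1_1; class1_2; class1_3; class1_4; class1_5].
Proof.
  apply trunc_sum_partition. intros v. cbn [list_sum map].
  unfold class1_1, class1_2, class1_3, class1_4, class1_5.
  destruct (half_lhs1 v), (congr (fst v) (snd v) 8), (congr (3 * fst v + 5 * snd v) 8 16),
    (congr (fst v + 5 * snd v) 8 16), (congr (fst v + 5 * snd v) 16 32); reflexivity.
Qed.

Lemma param_class1_1 q K :
  form_sum q (Form 0 8 Odds 60 Ints) K = trunc_sum q class1_1 (form_weight lhs1) K.
Proof.
  apply trunc_sum_bij with (f := fun v => (fst v - 10 * snd v, fst v + 6 * snd v)%Z)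
    (g := fun w => ((3 * fst w + 5 * snd w) / 8, (snd w - fst w) / 16)%Z); solve_param.
Qed.

Lemma param_class1_2 q K :
  form_sum q (Form 14 4 Ints 120 Odds) K = trunc_sum q class1_2 (form_weight lhs1) K.
Proof.
  apply trunc_sum_bij with (f := fun v => (2 * fst v - 5 * snd v, 2 * fst v + 3 * snd v)%Z)
    (g := fun w => ((3 * fst w + 5 * snd w) / 16, (snd w - fst w) / 8)%Z); solve_param.
Qed.

Lemma param_class1_3 q K :
  trunc_sum q half_psipsi1 (form_weight psipsi1) K = trunc_sum q class1_3 (form_weight lhs1) K.
Proof.
  apply trunc_sum_bij with (f := fun v => ((fst v - 5 * snd v) / 2, (3 * fst v + snd v) / 2)%Z)
    (g := fun w => ((fst w + 5 * snd w) / 8, (snd w - 3 * fst w) / 8)%Z); solve_param.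
Qed.

Lemma param_class1_4 q K :
  form_sum q (Form 5 48 Odds 40 Ints) K = trunc_sum q class1_4 (form_weight lhs1) K.
Proof.
  apply trunc_sum_bij with (f := fun v => (fst v - 10 * snd v, 3 * fst v + 2 * snd v)%Z)
    (g := fun w => ((fst w + 5 * snd w) / 16, (snd w - 3 * fst w) / 32)%Z); solve_param.
Qed.

Lemma param_class1_5 q K :
  form_sum q (Form 9 24 Ints 80 Odds) K = trunc_sum q class1_5 (form_weight lhs1) K.
Proof.
  apply trunc_sum_bij with (f := fun v => (2 * fst v - 5 * snd v, 6 * fst v + snd v)%Z)
    (g := fun w => ((fst w + 5 * snd w) / 32, (snd w - 3 * fst w) / 16)%Z); solve_param.
Qed.

Definition terms1 : list (R * form) :=
  [(2, Form 0 8 Odds 60 Ints); (2, Form 14 4 Ints 120 Odds); (1, psipsi1);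
   (2, Form 5 48 Odds 40 Ints); (2, Form 9 24 Ints 80 Odds)].

Lemma lhs1_decomposition q K :
  form_sum q lhs1 K = lsum (fun t => RtoC (fst t) * form_sum q (snd t) K) terms1.
Proof.
  rewrite lhs1_halves, half_lhs1_partition. cbn [lsum fold_right terms1 fst snd].
  rewrite psipsi1_halves, <- param_class1_1, <- param_class1_2, <- param_class1_3,
    <- param_class1_4, <- param_class1_5.
  ring.
Qed.

Lemma psi3_psi5 q : (Cmod q < 1)%R ->
  psi (q ^ 3) * psi (q ^ 5)
    = phi (q ^ 60) * psi (q ^ 8) + q ^ 14 * phi (q ^ 4) * psi (q ^ 120)
      + q ^ 3 * psi (q ^ 12) * psi (q ^ 20) + q ^ 5 * phi (q ^ 40) * psi (q ^ 48)
      + q ^ 9 * phi (q ^ 24) * psi (q ^ 80).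
Proof.
  intros Hq.
  assert (E : form_value q lhs1 = lsum (fun t => RtoC (fst t) * form_value q (snd t)) terms1).
  { apply form_identity; [exact Hq | split; cbn; lia | | apply lhs1_decomposition].
    intros t Ht. repeat destruct Ht as [<- | Ht]; try contradiction; split; cbn; lia. }
  apply Cmult_4_inj. transitivity (form_value q lhs1).
  - unfold form_value, lhs1. cbn [theta f_shift f_scale1 f_supp1 f_scale2 f_supp2]. ring.
  - rewrite E. cbn [lsum fold_right terms1 fst snd]. unfold form_value, psipsi1.
    cbn [theta f_shift f_scale1 f_supp1 f_scale2 f_supp2]. ring.
Qed.

(** * The second identity *)

Definition lhs2 : form := Form 0 1 Odds 15 Odds.

Definition half_lhs2 (v : Z * Z) : bool :=
  form_support lhs2 v
  && (congr (fst v) (snd v) 16 || congr (fst v) (snd v + 8) 16 || congr (fst v) (3 * snd v) 8).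

Definition class2_1 (v : Z * Z) : bool :=
  half_lhs2 v && congr (fst v) (snd v) 16 && congr (fst v + 15 * snd v) 16 32.
Definition class2_2 (v : Z * Z) : bool :=
  half_lhs2 v && congr (fst v) (snd v) 16 && negb (congr (fst v + 15 * snd v) 16 32).
Definition class2_3 (v : Z * Z) : bool :=
  half_lhs2 v && negb (congr (fst v) (snd v) 16) && congr (fst v) (snd v + 8) 16.
Definition class2_4 (v : Z * Z) : bool :=
  half_lhs2 v && negb (congr (fst v) (snd v) 16) && negb (congr (fst v) (snd v + 8) 16)
  && congr (fst v + 5 * snd v) 8 16.
Definition class2_5 (v : Z * Z) : bool :=
  half_lhs2 v && negb (congr (fst v) (snd v) 16) && negb (congr (fst v) (snd v + 8) 16)
  && negb (congr (fst v + 5 * snd v) 8 16).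

Definition psipsi2 : form := Form 6 4 Odds 60 Odds.

Definition half_psipsi2 (v : Z * Z) : bool :=
  form_support psipsi2 v && congr (fst v) (snd v + 2) 4.

#[local] Hint Unfold lhs2 half_lhs2 class2_1 class2_2 class2_3 class2_4 class2_5
  psipsi2 half_psipsi2 : classes.

Lemma lhs2_halves q K : form_sum q lhs2 K = 2 * trunc_sum q half_lhs2 (form_weight lhs2) K.
Proof.
  apply trunc_sum_half; [apply coercive_form; split; cbn; lia | apply form_weight_negate_snd | |];
    intros [x y]; decide_congr.
Qed.

Lemma psipsi2_halves q K :
  form_sum q psipsi2 K = 2 * trunc_sum q half_psipsi2 (form_weight psipsi2) K.
Proof.
  apply trunc_sum_half; [apply coercive_form; split; cbn; lia | apply form_weight_negate_snd | |];
    intros [x y]; decide_congr.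
Qed.

Lemma half_lhs2_partition q K : trunc_sum q half_lhs2 (form_weight lhs2) K
  = lsum (fun Q => trunc_sum q Q (form_weight lhs2) K)
      [class2_1; class2_2; class2_3; class2_4; class2_5].
Proof.
  apply trunc_sum_partition. intros v. cbn [list_sum map].
  unfold class2_1, class2_2, class2_3, class2_4, class2_5.
  destruct (half_lhs2 v), (congr (fst v) (snd v) 16), (congr (fst v + 15 * snd v) 16 32),
    (congr (fst v) (snd v + 8) 16), (congr (fst v + 5 * snd v) 8 16); reflexivity.
Qed.

Lemma param_class2_1 q K :
  form_sum q (Form 0 16 Odds 120 Ints) K = trunc_sum q class2_1 (form_weight lhs2) K.
Proof.
  apply trunc_sum_bij with (f := fun v => (fst v + 30 * snd v, fst v - 2 * snd v)%Z)
    (g := fun w => ((fst w + 15 * snd w) / 16, (fst w - snd w) / 32)%Z); solve_param.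
Qed.

Lemma param_class2_2 q K :
  form_sum q (Form 28 8 Ints 240 Odds) K = trunc_sum q class2_2 (form_weight lhs2) K.
Proof.
  apply trunc_sum_bij with (f := fun v => (2 * fst v + 15 * snd v, 2 * fst v - snd v)%Z)
    (g := fun w => ((fst w + 15 * snd w) / 32, (fst w - snd w) / 16)%Z); solve_param.
Qed.

Lemma param_class2_3 q K :
  trunc_sum q half_psipsi2 (form_weight psipsi2) K = trunc_sum q class2_3 (form_weight lhs2) K.
Proof.
  apply trunc_sum_bij with (f := fun v => ((fst v + 15 * snd v) / 2, (fst v - snd v) / 2)%Z)
    (g := fun w => ((fst w + 15 * snd w) / 8, (fst w - snd w) / 8)%Z); solve_param.
Qed.

Lemma param_class2_4 q K :
  form_sum q (Form 1 24 Odds 20 Ints) K = trunc_sum q class2_4 (form_weight lhs2) K.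
Proof.
  apply trunc_sum_bij with (f := fun v => (3 * fst v + 10 * snd v, fst v - 2 * snd v)%Z)
    (g := fun w => ((fst w + 5 * snd w) / 8, (fst w - 3 * snd w) / 16)%Z); solve_param.
Qed.

Lemma param_class2_5 q K :
  form_sum q (Form 3 12 Ints 40 Odds) K = trunc_sum q class2_5 (form_weight lhs2) K.
Proof.
  apply trunc_sum_bij with (f := fun v => (6 * fst v + 5 * snd v, 2 * fst v - snd v)%Z)
    (g := fun w => ((fst w + 5 * snd w) / 16, (fst w - 3 * snd w) / 8)%Z); solve_param.
Qed.

Definition terms2 : list (R * form) :=
  [(2, Form 0 16 Odds 120 Ints); (2, Form 28 8 Ints 240 Odds); (1, psipsi2);
   (2, Form 1 24 Odds 20 Ints); (2, Form 3 12 Ints 40 Odds)].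

Lemma lhs2_decomposition q K :
  form_sum q lhs2 K = lsum (fun t => RtoC (fst t) * form_sum q (snd t) K) terms2.
Proof.
  rewrite lhs2_halves, half_lhs2_partition. cbn [lsum fold_right terms2 fst snd].
  rewrite psipsi2_halves, <- param_class2_1, <- param_class2_2, <- param_class2_3,
    <- param_class2_4, <- param_class2_5.
  ring.
Qed.

Lemma psi1_psi15 q : (Cmod q < 1)%R ->
  psi q * psi (q ^ 15)
    = phi (q ^ 120) * psi (q ^ 16) + q ^ 28 * phi (q ^ 8) * psi (q ^ 240)
      + q ^ 6 * psi (q ^ 4) * psi (q ^ 60) + q * phi (q ^ 20) * psi (q ^ 24)
      + q ^ 3 * phi (q ^ 12) * psi (q ^ 40).
Proof.
  intros Hq.
  assert (E : form_value q lhs2 = lsum (fun t => RtoC (fst t) * form_value q (snd t)) terms2).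
  { apply form_identity; [exact Hq | split; cbn; lia | | apply lhs2_decomposition].
    intros t Ht. repeat destruct Ht as [<- | Ht]; try contradiction; split; cbn; lia. }
  apply Cmult_4_inj. transitivity (form_value q lhs2).
  - unfold form_value, lhs2. cbn [theta f_shift f_scale1 f_supp1 f_scale2 f_supp2].
    rewrite Cpow_1_r. ring.
  - rewrite E. cbn [lsum fold_right terms2 fst snd]. unfold form_value, psipsi2.
    cbn [theta f_shift f_scale1 f_supp1 f_scale2 f_supp2]. rewrite Cpow_1_r. ring.
Qed.

Theorem lemma6p2 (q : C) (hq : (Cmod q < 1)%R) :
  psi (q ^ 3) * psi (q ^ 5)
    = phi (q ^ 60) * psi (q ^ 8) + q ^ 14 * phi (q ^ 4) * psi (q ^ 120)
      + q ^ 3 * psi (q ^ 12) * psi (q ^ 20) + q ^ 5 * phi (q ^ 40) * psi (q ^ 48)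
      + q ^ 9 * phi (q ^ 24) * psi (q ^ 80)
  /\
  psi q * psi (q ^ 15)
    = phi (q ^ 120) * psi (q ^ 16) + q ^ 28 * phi (q ^ 8) * psi (q ^ 240)
      + q ^ 6 * psi (q ^ 4) * psi (q ^ 60) + q * phi (q ^ 20) * psi (q ^ 24)
      + q ^ 3 * phi (q ^ 12) * psi (q ^ 40).
Proof. split; [apply psi3_psi5 | apply psi1_psi15]; exact hq. Qed.
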